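(* For every integer $n\ge0$ and every $x>0$, $$\frac{2n}{x}+\frac{i_{n+1}(x)}{i_n(x)}-\frac{k_{n+1}(x)}{k_n(x)}<0 .$$
   Context: $i_n(x)=\sqrt{\frac{\pi}{2x}}\,I_{n+1/2}(x)$ and $k_n(x)=\sqrt{\frac{2}{\pi x}}\,K_{n+1/2}(x)$ are the modified spherical Bessel functions of the first and second kind, where $I_\nu$ and $K_\nu$ are the modified Bessel functions of the first and second kind. *)

From Stdlib Require Import Reals Factorial.
From Coquelicot Require Import Coquelicot.
Open Scope R_scope.

Definition Gamma (s : R) : R :=
  RInt_gen (fun t => Rpower t (s - 1) * exp (- t))
           (at_right 0) (Rbar_locally p_infty).

Definition BesselI (nu x : R) : R :=
  Series (fun k : nat =>
    (x / 2) ^ (2 * k) * Rpower (x / 2) nu / (INR (fact k) * Gamma (INR k + nu + 1))).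

(* Modified Bessel function of the second kind, x > 0 (DLMF 10.32.9):
   K_nu(x) = int_0^oo exp(-x cosh t) cosh(nu t) dt. *)
Definition BesselK (nu x : R) : R :=
  RInt_gen (fun t => exp (- x * cosh t) * cosh (nu * t))
           (at_point 0) (Rbar_locally p_infty).

Definition sph_i (n : nat) (x : R) : R :=
  sqrt (PI / (2 * x)) * BesselI (INR n + / 2) x.

Definition sph_k (n : nat) (x : R) : R :=
  sqrt (2 / (PI * x)) * BesselK (INR n + / 2) x.

(* Put nu_m = m + 1/2, a_m = x I_(nu_m + 1)(x) / I_nu_m(x) and b_m = x K_(nu_m + 1)(x) / K_nu_m(x);
   the claim reads 2n + a_n - b_n < 0.  The three-term recurrences of I (from its power series)
   and of K (integrating the derivative of exp (-x cosh t) sinh (nu t)) give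
     a_m (2 nu_m + 2 + a_(m+1)) = x^2,   b_(m+1) = 2 nu_m + 2 + x^2 / b_m,   b_0 = 1 + x,
   the last one because K_(-1/2) = K_(1/2).  With rad(c) = sqrt (c^2 + x^2), induction keeps
   b_m in [nu_m + rad(nu_m), nu_m + 1 + rad(nu_m + 1)].  For a_m one argues backwards: the
   distance from a_m to the bracket [rad(nu_m + 1) - nu_m - 1, rad(nu_m) - nu_m] is bounded and
   is multiplied at each step by at most x^2 / (2 nu_m + 2)^2, which is eventually below 1/2,
   so it vanishes.  Hence 2n + a_n - b_n <= 2n - 2 nu_n = -1. *)

From Stdlib Require Import Reals Lra Lia Factorial FunctionalExtensionality.
From Coquelicot Require Import Coquelicot.
Open Scope R_scope.

Lemma exp_le_exp x y : x <= y -> exp x <= exp y.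
Proof.
  intros [Hlt | ->]; [left; now apply exp_increasing | apply Rle_refl].
Qed.

Lemma ln_le_sub_1 y : 0 < y -> ln y <= y - 1.
Proof. intros Hy. pose proof (exp_ineq1_le (ln y)) as H. rewrite exp_ln in H; lra. Qed.

Lemma mul_ln_sub_le p t : 0 < p -> 0 < t -> p * ln t - t <= p * (ln p - 1).
Proof.
  intros Hp Ht. pose proof (ln_le_sub_1 (t / p) ltac:(apply Rdiv_lt_0_compat; lra)) as H.
  rewrite ln_div in H by lra.
  apply Rmult_le_compat_l with (r := p) in H; [|lra].
  replace (p * (t / p - 1)) with (t - p) in H by (field; lra). lra.
Qed.

(** * Improper integrals on (a, +oo) *)

Lemma ex_RInt_gen_cauchy (Fa Fb : (R -> Prop) -> Prop) (f : R -> R) :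
  ProperFilter Fa -> ProperFilter Fb ->
  filter_prod Fa Fb (fun ab => ex_RInt f (fst ab) (snd ab)) ->
  (forall eps : posreal, exists P, filter_prod Fa Fb P /\
     forall u v, P u -> P v -> Rabs (RInt f (fst v) (snd v) - RInt f (fst u) (snd u)) < eps) ->
  ex_RInt_gen f Fa Fb.
Proof.
  intros HFa HFb Hex Hcauchy.
  apply (filterlimi_locally_cauchy (U := R_CompleteSpace)
           (fun ab : R * R => is_RInt f (fst ab) (snd ab))).
  - apply filter_imp with (2 := Hex). intros ab Hab. split.
    + exists (RInt f (fst ab) (snd ab)). now apply (RInt_correct (V := R_CompleteNormedModule)).
    + intros y1 y2 H1 H2.
      now rewrite <- (is_RInt_unique (V := R_CompleteNormedModule) _ _ _ _ H1),
                  <- (is_RInt_unique (V := R_CompleteNormedModule) _ _ _ _ H2).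
  - intros eps. destruct (Hcauchy eps) as [P [HP Hbound]].
    exists P. split; [exact HP|].
    intros u v Pu Pv yu yv Hu Hv.
    rewrite <- (is_RInt_unique (V := R_CompleteNormedModule) _ _ _ _ Hu),
            <- (is_RInt_unique (V := R_CompleteNormedModule) _ _ _ _ Hv).
    now apply Hbound.
Qed.

Lemma ex_RInt_cont (f : R -> R) a b :
  (forall t, Rmin a b <= t <= Rmax a b -> continuous f t) -> ex_RInt f a b.
Proof. exact (ex_RInt_continuous (V := R_CompleteNormedModule) f a b). Qed.

Lemma abs_RInt_le_const (f : R -> R) a b M :
  (forall t, Rmin a b <= t <= Rmax a b -> continuous f t /\ Rabs (f t) <= M) ->
  Rabs (RInt f a b) <= Rabs (b - a) * M.
Proof.
  intros Hf. apply (norm_RInt_le_const_abs f a b (RInt f a b) M).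
  - intros t Ht. apply Hf, Ht.
  - apply (RInt_correct (V := R_CompleteNormedModule)), ex_RInt_cont.
    intros t Ht. apply Hf, Ht.
Qed.

Lemma at_right_0_lt (d : R) : 0 < d -> at_right 0 (fun a => 0 < a < d).
Proof.
  intros Hd. exists (mkposreal d Hd). intros a Ha Ha0.
  change (Rabs (a - 0) < d) in Ha. rewrite Rminus_0_r, Rabs_pos_eq in Ha; lra.
Qed.

Lemma ex_RInt_gen_at_right_0 (f : R -> R) (M : R) :
  (forall t, 0 < t -> continuous f t) ->
  (forall t, 0 < t <= 1 -> Rabs (f t) <= M) ->
  ex_RInt_gen f (at_right 0) (at_point 1).
Proof.
  intros Hcont Hbound.
  assert (HM : 0 <= M) by (apply Rle_trans with (Rabs (f 1)); [apply Rabs_pos | apply Hbound; lra]).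
  apply ex_RInt_gen_cauchy.
  - apply at_right_proper_filter.
  - apply at_point_filter.
  - apply Filter_prod with (fun a => 0 < a < 1) (fun b => b = 1);
      [apply at_right_0_lt; lra | reflexivity |].
    intros a b Ha ->; simpl in *. apply ex_RInt_cont. intros t Ht. apply Hcont.
    rewrite Rmin_left in Ht; lra.
  - intros eps. pose proof (cond_pos eps) as Heps. set (d := Rmin 1 (eps / (M + 1))).
    assert (Hd : 0 < d) by (apply Rmin_glb_lt; [lra | apply Rdiv_lt_0_compat; lra]).
    exists (fun ab => 0 < fst ab < d /\ snd ab = 1). split.
    { apply Filter_prod with (fun a => 0 < a < d) (fun b => b = 1);
        [apply at_right_0_lt, Hd | reflexivity |].
      now intros a b Ha Hb. }
    intros [a b] [a' b'] [Ha ->] [Ha' ->]; simpl in *.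
    assert (Hd1 : d <= 1) by apply Rmin_l.
    assert (Hex : forall p q, 0 < p <= 1 -> 0 < q <= 1 -> ex_RInt f p q).
    { intros p q Hp Hq. apply ex_RInt_cont. intros t Ht. apply Hcont.
      apply Rlt_le_trans with (Rmin p q); [apply Rmin_glb_lt|]; lra. }
    rewrite <- (RInt_Chasles f a' a 1) by (apply Hex; lra).
    change (plus (RInt f a' a) (RInt f a 1)) with (RInt f a' a + RInt f a 1).
    rewrite Rplus_minus_r.
    apply Rle_lt_trans with (Rabs (a - a') * M).
    + apply abs_RInt_le_const. intros t Ht.
      assert (0 < t <= 1).
      { split; [apply Rlt_le_trans with (Rmin a' a); [apply Rmin_glb_lt|]|
                apply Rle_trans with (Rmax a' a); [|apply Rmax_lub]]; lra. }
      split; [apply Hcont | apply Hbound]; lra.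
    + apply Rle_lt_trans with (Rabs (a - a') * (M + 1));
        [apply Rmult_le_compat_l; [apply Rabs_pos | lra]|].
      apply Rlt_le_trans with (eps / (M + 1) * (M + 1)); [|right; field; lra].
      apply Rmult_lt_compat_r; [lra|].
      apply Rlt_le_trans with d; [apply Rabs_def1; lra | apply Rmin_r].
Qed.

Lemma abs_RInt_le_inv (f : R -> R) C p q :
  0 < p <= q ->
  (forall t, p <= t <= q -> continuous f t /\ Rabs (f t) <= C / (t * t)) ->
  Rabs (RInt f p q) <= C / p - C / q.
Proof.
  intros Hpq Hf.
  assert (Hprim : is_RInt (fun t => C / (t * t)) p q (C / p - C / q)).
  { replace (C / p - C / q) with (minus ((fun t => - C / t) q) ((fun t => - C / t) p))
      by (unfold minus, plus, opp; simpl; field; lra).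
    apply (is_RInt_derive (fun t => - C / t));
      intros t Ht; rewrite Rmin_left, Rmax_right in Ht by lra.
    - auto_derive; [lra | field; lra].
    - apply continuity_pt_filterlim, continuity_pt_div; [| | nra].
      + apply continuity_pt_const. now intros u v.
      + apply continuity_pt_mult; apply continuity_pt_id. }
  apply (norm_RInt_le f (fun t => C / (t * t)) p q); [lra | | | exact Hprim].
  - intros t Ht. apply Hf, Ht.
  - apply (RInt_correct (V := R_CompleteNormedModule)), ex_RInt_cont.
    intros t Ht. rewrite Rmin_left, Rmax_right in Ht by lra. apply Hf, Ht.
Qed.

Lemma inv_sq_majorant_nonneg (f : R -> R) C :
  (forall t, 1 <= t -> continuous f t /\ Rabs (f t) <= C / (t * t)) -> 0 <= C.
Proof.
  intros Hf. apply Rle_trans with (Rabs (f 1)); [apply Rabs_pos|].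
  replace C with (C / (1 * 1)) by field. apply Hf, Rle_refl.
Qed.

Lemma abs_RInt_le_tail (f : R -> R) C p q :
  1 <= p -> 1 <= q ->
  (forall t, 1 <= t -> continuous f t /\ Rabs (f t) <= C / (t * t)) ->
  Rabs (RInt f p q) <= C / Rmin p q.
Proof.
  intros Hp Hq Hf.
  assert (Hsorted : forall p q, 1 <= p <= q -> Rabs (RInt f p q) <= C / p).
  { intros p' q' Hpq. apply Rle_trans with (C / p' - C / q').
    - apply abs_RInt_le_inv; [lra|]. intros t Ht. apply Hf. lra.
    - pose proof (inv_sq_majorant_nonneg f C Hf).
      assert (0 <= C / q') by (apply Rdiv_le_0_compat; lra). lra. }
  destruct (Rle_dec p q) as [Hpq | Hpq].
  - rewrite Rmin_left by exact Hpq. now apply Hsorted.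
  - rewrite Rmin_right by lra.
    rewrite <- (opp_RInt_swap (V := R_CompleteNormedModule)).
    + change (Rabs (- RInt f q p) <= C / q). rewrite Rabs_Ropp. apply Hsorted. lra.
    + apply ex_RInt_cont. intros t Ht. apply Hf.
      apply Rle_trans with (Rmin q p); [apply Rmin_glb|]; lra.
Qed.

Lemma ex_RInt_gen_pinfty (f : R -> R) (C : R) :
  (forall t, 1 <= t -> continuous f t /\ Rabs (f t) <= C / (t * t)) ->
  ex_RInt_gen f (at_point 1) (Rbar_locally p_infty).
Proof.
  intros Hf.
  pose proof (inv_sq_majorant_nonneg f C Hf) as HC.
  assert (Hex : forall p q, 1 <= p -> 1 <= q -> ex_RInt f p q).
  { intros p q Hp Hq. apply ex_RInt_cont. intros t Ht. apply Hf.
    apply Rle_trans with (Rmin p q); [apply Rmin_glb|]; lra. }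
  apply ex_RInt_gen_cauchy.
  - apply at_point_filter.
  - apply Rbar_locally_filter.
  - apply Filter_prod with (fun a => a = 1) (fun b => 1 < b); [reflexivity | now exists 1 |].
    intros a b -> Hb; simpl in *. apply Hex; lra.
  - intros eps. pose proof (cond_pos eps) as Heps.
    set (B := 1 + C / eps).
    assert (HB1 : 1 <= B) by (apply Rdiv_le_0_compat with (r1 := C) in Heps; unfold B; lra).
    assert (HCB : C / B < eps).
    { apply Rmult_lt_reg_r with B; [lra|].
      replace (C / B * B) with C by (field; lra).
      replace (eps * B) with (eps + C) by (unfold B; field; lra). lra. }
    exists (fun ab => fst ab = 1 /\ B < snd ab). split.
    { apply Filter_prod with (fun a => a = 1) (fun b => B < b); [reflexivity | now exists B |].
      now intros a b Ha Hb. }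
    intros [a b] [a' b'] [-> Hb] [-> Hb']; simpl in *.
    rewrite <- (RInt_Chasles f 1 b b') by (apply Hex; lra).
    change (plus (RInt f 1 b) (RInt f b b')) with (RInt f 1 b + RInt f b b').
    rewrite Rplus_minus_l.
    apply Rle_lt_trans with (C / B); [|exact HCB].
    apply Rle_trans with (C / Rmin b b'); [apply abs_RInt_le_tail; [lra | lra | exact Hf]|].
    assert (B <= Rmin b b') by (apply Rmin_glb; lra).
    apply Rmult_le_compat_l; [lra | apply Rinv_le_contravar; lra].
Qed.

Lemma is_RInt_gen_pinfty_gt_0 (Fa : (R -> Prop) -> Prop) (f : R -> R) (c l : R) :
  ProperFilter Fa -> Fa (fun a => c < a <= 1) ->
  (forall t, c < t -> continuous f t /\ 0 < f t) ->
  is_RInt_gen f Fa (Rbar_locally p_infty) l -> 0 < l.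
Proof.
  intros HFa Hnear Hf Hl.
  assert (Hc : c < 1) by (destruct (filter_ex _ Hnear) as [a Ha]; lra).
  assert (Hex : forall p q, c < p -> c < q -> ex_RInt f p q).
  { intros p q Hp Hq. apply ex_RInt_cont. intros t Ht. apply Hf.
    apply Rlt_le_trans with (Rmin p q); [apply Rmin_glb_lt|]; lra. }
  assert (Hnonneg : forall p q, c < p <= q -> 0 <= RInt f p q).
  { intros p q Hpq. apply RInt_ge_0; [lra | apply Hex; lra |].
    intros t Ht. left. apply Hf. lra. }
  set (m := RInt f 1 2).
  assert (Hm : 0 < m).
  { apply RInt_gt_0; [lra | |]; intros t Ht; apply Hf; lra. }
  assert (Hm2 : 0 < m / 2) by lra.
  assert (Hclose := proj1 (filterlimi_locally _ l) Hl (mkposreal _ Hm2)).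
  assert (Hrange : filter_prod Fa (Rbar_locally p_infty) (fun ab => c < fst ab <= 1 /\ 2 < snd ab)).
  { apply Filter_prod with (1 := Hnear) (R := fun b => 2 < b); [now exists 2 |].
    now intros a b Ha Hb. }
  destruct (filter_ex _ (filter_and _ _ Hclose Hrange)) as [[a b] [[z [Hz Hball]] [Ha Hb]]].
  simpl in *.
  rewrite <- (is_RInt_unique (V := R_CompleteNormedModule) _ _ _ _ Hz) in Hball.
  change (Rabs (RInt f a b - l) < m / 2) in Hball.
  rewrite <- (RInt_Chasles f a 1 b), <- (RInt_Chasles f 1 2 b) in Hball by (apply Hex; lra).
  change (Rabs (RInt f a 1 + (m + RInt f 2 b) - l) < m / 2) in Hball.
  pose proof (Hnonneg a 1 ltac:(lra)). pose proof (Hnonneg 2 b ltac:(lra)).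
  apply Rabs_def2 in Hball. lra.
Qed.

Lemma is_RInt_gen_derive_diff (Fa : (R -> Prop) -> Prop) (h f g : R -> R) (c l : R) :
  Filter Fa -> Fa (fun a => c < a) ->
  (forall t, c < t -> is_derive h t (f t - g t) /\ continuous f t /\ continuous g t) ->
  filterlim h Fa (locally 0) -> filterlim h (Rbar_locally p_infty) (locally 0) ->
  is_RInt_gen g Fa (Rbar_locally p_infty) l -> is_RInt_gen f Fa (Rbar_locally p_infty) l.
Proof.
  intros HFa Hnear Hh Hlim0 Hliminf Hg.
  assert (HD : forall t, c < t -> Derive h t = f t - g t).
  { intros t Ht. apply is_derive_unique, Hh, Ht. }
  assert (Hdom : filter_prod Fa (Rbar_locally p_infty)
     (fun ab => forall t, Rmin (fst ab) (snd ab) <= t <= Rmax (fst ab) (snd ab) -> c < t)).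
  { apply Filter_prod with (1 := Hnear) (R := fun b => c < b); [now exists c |].
    intros a b Ha Hb t Ht; simpl in *.
    apply Rlt_le_trans with (Rmin a b); [apply Rmin_glb_lt|]; lra. }
  assert (Hderiv : is_RInt_gen (Derive h) Fa (Rbar_locally p_infty) (0 - 0)).
  { apply is_RInt_gen_Derive; [| | exact Hlim0 | exact Hliminf];
      apply filter_imp with (2 := Hdom); intros ab Hab t Ht; specialize (Hab t Ht).
    - eexists. apply Hh, Hab.
    - apply continuous_ext_loc with (fun y => f y - g y).
      + assert (Hpos : 0 < t - c) by lra.
        exists (mkposreal _ Hpos). intros y Hy. symmetry. apply HD.
        change (Rabs (y - t) < t - c) in Hy. apply Rabs_def2 in Hy. lra.
      + apply (continuous_minus (V := R_NormedModule)); apply Hh, Hab. }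
  replace l with (plus (0 - 0) l) by (unfold plus; simpl; ring).
  apply is_RInt_gen_ext with (fun t => plus (Derive h t) (g t)).
  - apply filter_imp with (2 := Hdom). intros ab Hab t Ht.
    rewrite HD by (apply Hab; lra). unfold plus; simpl; ring.
  - exact (is_RInt_gen_plus (V := R_NormedModule) (Derive h) g _ _ Hderiv Hg).
Qed.

Lemma filterlim_at_right_0_of_abs_le (h : R -> R) :
  (forall t, 0 < t <= 1 -> Rabs (h t) <= t) -> filterlim h (at_right 0) (locally 0).
Proof.
  intros Hh. apply (proj2 (filterlim_locally h 0)). intros eps.
  assert (Hd : 0 < Rmin eps 1) by (apply Rmin_glb_lt; [apply cond_pos | lra]).
  exists (mkposreal _ Hd). intros t Ht Ht0.
  change (Rabs (t - 0) < Rmin eps 1) in Ht. rewrite Rminus_0_r, Rabs_pos_eq in Ht by lra.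
  change (Rabs (h t - 0) < eps). rewrite Rminus_0_r.
  pose proof (Rmin_l eps 1). pose proof (Rmin_r eps 1).
  apply Rle_lt_trans with t; [apply Hh|]; lra.
Qed.

Lemma div_mul_self_le_div C t : 0 <= C -> 1 <= t -> C / (t * t) <= C / t.
Proof.
  intros HC Ht. apply Rmult_le_compat_l; [exact HC|].
  apply Rinv_le_contravar; [lra | nra].
Qed.

Lemma filterlim_pinfty_of_abs_le_inv (h : R -> R) (C : R) :
  (forall t, 1 <= t -> Rabs (h t) <= C / t) -> filterlim h (Rbar_locally p_infty) (locally 0).
Proof.
  intros Hh. apply (proj2 (filterlim_locally h 0)). intros eps.
  pose proof (cond_pos eps) as Heps.
  exists (Rmax 1 (Rabs C / eps)). intros t Ht.
  pose proof (Rmax_l 1 (Rabs C / eps)). pose proof (Rmax_r 1 (Rabs C / eps)).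
  change (Rabs (h t - 0) < eps). rewrite Rminus_0_r.
  apply Rle_lt_trans with (Rabs C / t).
  - apply Rle_trans with (C / t); [apply Hh; lra|].
    apply Rmult_le_compat_r; [left; apply Rinv_0_lt_compat; lra | apply Rle_abs].
  - apply Rmult_lt_reg_r with (t / eps); [apply Rdiv_lt_0_compat; lra|].
    replace (Rabs C / t * (t / eps)) with (Rabs C / eps) by (field; lra).
    replace (eps * (t / eps)) with t by (field; lra). lra.
Qed.

(** * The Gamma function *)

Definition gamma_integrand (s t : R) := Rpower t (s - 1) * exp (- t).

Lemma gamma_integrand_exp s t : gamma_integrand s t = exp ((s - 1) * ln t - t).
Proof. unfold gamma_integrand, Rpower. now rewrite <- exp_plus. Qed.

Lemma gamma_integrand_pos s t : 0 < gamma_integrand s t.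
Proof. rewrite gamma_integrand_exp. apply exp_pos. Qed.

Lemma gamma_integrand_succ s t : 0 < t -> gamma_integrand (s + 1) t = t * gamma_integrand s t.
Proof.
  intros Ht. rewrite !gamma_integrand_exp.
  replace ((s + 1 - 1) * ln t - t) with (ln t + ((s - 1) * ln t - t)) by ring.
  now rewrite exp_plus, exp_ln.
Qed.

Lemma continuous_gamma_integrand s t : 0 < t -> continuous (gamma_integrand s) t.
Proof.
  intros Ht. apply (ex_derive_continuous (K := R_AbsRing) (V := R_NormedModule)).
  unfold gamma_integrand, Rpower. auto_derive. exact Ht.
Qed.

Lemma gamma_integrand_le_1 s t : 1 <= s -> 0 < t <= 1 -> gamma_integrand s t <= 1.
Proof.
  intros Hs Ht. assert (ln t <= 0) by (rewrite <- ln_1; apply ln_le; lra).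
  rewrite gamma_integrand_exp.
  apply Rle_trans with (exp 0); [apply exp_le_exp; nra | now rewrite exp_0].
Qed.

Lemma gamma_integrand_le_inv_sq s t : -1 < s -> 1 <= t ->
  gamma_integrand s t <= exp ((s + 1) * (ln (s + 1) - 1)) / (t * t).
Proof.
  intros Hs Ht.
  assert (Hsq : t * t = exp (2 * ln t)).
  { replace (2 * ln t) with (ln t + ln t) by ring. rewrite exp_plus, exp_ln; lra. }
  apply Rmult_le_reg_r with (t * t); [nra|].
  replace (exp ((s + 1) * (ln (s + 1) - 1)) / (t * t) * (t * t))
    with (exp ((s + 1) * (ln (s + 1) - 1))) by (field; nra).
  rewrite Hsq, gamma_integrand_exp, <- exp_plus.
  apply exp_le_exp.
  pose proof (mul_ln_sub_le (s + 1) t ltac:(lra) ltac:(lra)). lra.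
Qed.

Lemma ex_RInt_gen_gamma_integrand s : 1 <= s ->
  ex_RInt_gen (gamma_integrand s) (at_right 0) (Rbar_locally p_infty).
Proof.
  intros Hs. apply ex_RInt_gen_Chasles with 1.
  - apply ex_RInt_gen_at_right_0 with 1.
    + apply continuous_gamma_integrand.
    + intros t Ht. rewrite Rabs_pos_eq by (left; apply gamma_integrand_pos).
      now apply gamma_integrand_le_1.
  - apply ex_RInt_gen_pinfty with (exp ((s + 1) * (ln (s + 1) - 1))).
    intros t Ht. split; [apply continuous_gamma_integrand; lra|].
    rewrite Rabs_pos_eq by (left; apply gamma_integrand_pos).
    apply gamma_integrand_le_inv_sq; lra.
Qed.

Lemma is_RInt_gen_Gamma s : 1 <= s ->
  is_RInt_gen (gamma_integrand s) (at_right 0) (Rbar_locally p_infty) (Gamma s).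
Proof.
  intros Hs. apply (RInt_gen_correct (V := R_CompleteNormedModule)).
  now apply ex_RInt_gen_gamma_integrand.
Qed.

Lemma Gamma_pos s : 1 <= s -> 0 < Gamma s.
Proof.
  intros Hs. apply is_RInt_gen_pinfty_gt_0 with (at_right 0) (gamma_integrand s) 0.
  - apply at_right_proper_filter.
  - apply filter_imp with (2 := at_right_0_lt 1 Rlt_0_1). intros a Ha; lra.
  - intros t Ht. split; [now apply continuous_gamma_integrand | apply gamma_integrand_pos].
  - now apply is_RInt_gen_Gamma.
Qed.

Lemma is_derive_opp_gamma_integrand_succ s t : 0 < t ->
  is_derive (fun u => - gamma_integrand (s + 1) u) t
    (gamma_integrand (s + 1) t - s * gamma_integrand s t).
Proof.
  intros Ht. rewrite (gamma_integrand_succ s t Ht).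
  unfold gamma_integrand, Rpower.
  replace (exp ((s - 1) * ln t)) with (exp ((s + 1 - 1) * ln t) / t).
  - auto_derive; [exact Ht | field; lra].
  - replace ((s + 1 - 1) * ln t) with ((s - 1) * ln t + ln t) by ring.
    rewrite exp_plus, exp_ln by exact Ht. field. lra.
Qed.

Lemma Gamma_succ s : 1 <= s -> Gamma (s + 1) = s * Gamma s.
Proof.
  intros Hs. set (C := exp ((s + 1) * (ln (s + 1) - 1))).
  assert (H : is_RInt_gen (gamma_integrand (s + 1)) (at_right 0) (Rbar_locally p_infty)
                (s * Gamma s)).
  2: now apply (is_RInt_gen_unique (V := R_CompleteNormedModule)) in H.
  apply is_RInt_gen_derive_diff with (fun u => - gamma_integrand (s + 1) u)
    (fun u => s * gamma_integrand s u) 0.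
  - apply at_right_proper_filter.
  - apply filter_imp with (2 := at_right_0_lt 1 Rlt_0_1). intros a Ha; lra.
  - intros t Ht. split; [now apply is_derive_opp_gamma_integrand_succ|].
    split; [now apply continuous_gamma_integrand|].
    apply (continuous_scal_r (K := R_AbsRing) (V := R_NormedModule) s).
    now apply continuous_gamma_integrand.
  - apply filterlim_at_right_0_of_abs_le. intros t Ht.
    rewrite Rabs_Ropp, Rabs_pos_eq by (left; apply gamma_integrand_pos).
    rewrite gamma_integrand_succ by lra.
    pose proof (gamma_integrand_le_1 s t Hs Ht). nra.
  - apply filterlim_pinfty_of_abs_le_inv with C. intros t Ht.
    rewrite Rabs_Ropp, Rabs_pos_eq by (left; apply gamma_integrand_pos).
    rewrite gamma_integrand_succ by lra.
    pose proof (gamma_integrand_le_inv_sq s t ltac:(lra) Ht) as Hb. fold C in Hb.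
    apply Rle_trans with (t * (C / (t * t))); [apply Rmult_le_compat_l; lra|].
    right. field. lra.
  - apply (is_RInt_gen_scal (V := R_NormedModule) (gamma_integrand s) s).
    now apply is_RInt_gen_Gamma.
Qed.

(** * The modified Bessel function K *)

Lemma cosh_pos y : 0 < cosh y.
Proof. unfold cosh. pose proof (exp_pos y). pose proof (exp_pos (- y)). lra. Qed.

Lemma abs_cosh_le_exp_abs y : Rabs (cosh y) <= exp (Rabs y).
Proof.
  rewrite Rabs_pos_eq by (left; apply cosh_pos).
  unfold cosh, Rabs. destruct (Rcase_abs y).
  - assert (exp y <= exp (- y)) by (apply exp_le_exp; lra). lra.
  - assert (exp (- y) <= exp y) by (apply exp_le_exp; lra). lra.
Qed.

Lemma abs_sinh_le_exp_abs y : Rabs (sinh y) <= exp (Rabs y).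
Proof.
  pose proof (abs_cosh_le_exp_abs y). pose proof (exp_pos y). pose proof (exp_pos (- y)).
  rewrite Rabs_pos_eq in * by (left; apply cosh_pos).
  unfold cosh, sinh in *. apply Rabs_le. lra.
Qed.

Lemma sq_div_8_le_cosh t : 0 <= t -> t * t / 8 <= cosh t.
Proof.
  intros Ht. unfold cosh.
  pose proof (exp_ineq1_le (t / 2)). pose proof (exp_pos (- t)).
  assert (exp t = exp (t / 2) * exp (t / 2)) by (rewrite <- exp_plus; f_equal; field).
  nra.
Qed.

Lemma exp_neg_mul_cosh_le x b t : 0 < x -> 0 <= b -> 1 <= t ->
  exp (- x * cosh t) * exp (b * t) <= exp (2 * (b + 2) * (b + 2) / x) / (t * t).
Proof.
  intros Hx Hb Ht.
  apply Rmult_le_reg_r with (t * t); [nra|].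
  replace (exp (2 * (b + 2) * (b + 2) / x) / (t * t) * (t * t))
    with (exp (2 * (b + 2) * (b + 2) / x)) by (field; nra).
  replace (t * t) with (exp (2 * ln t))
    by (replace (2 * ln t) with (ln t + ln t) by ring; rewrite exp_plus, exp_ln; lra).
  rewrite <- !exp_plus. apply exp_le_exp.
  pose proof (ln_le_sub_1 t ltac:(lra)). pose proof (sq_div_8_le_cosh t ltac:(lra)).
  (* complete the square: [x t^2 / 8 - (b + 2) t + 2 (b + 2)^2 / x >= 0] *)
  apply Rmult_le_reg_l with x; [exact Hx|].
  replace (x * (2 * (b + 2) * (b + 2) / x)) with (2 * (b + 2) * (b + 2)) by (field; lra).
  assert (x * (x * (t * t / 8)) <= x * (x * cosh t)) by (apply Rmult_le_compat_l; nra).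
  assert (x * ln t <= x * t) by (apply Rmult_le_compat_l; lra).
  pose proof (Rle_0_sqr (x * t - 4 * (b + 2))). unfold Rsqr in *. nra.
Qed.

Lemma abs_exp_neg_mul_cosh_mul_le (g : R -> R) x nu t :
  (forall y, Rabs (g y) <= exp (Rabs y)) -> 0 < x -> 1 <= t ->
  Rabs (exp (- x * cosh t) * g (nu * t))
  <= exp (2 * (Rabs nu + 2) * (Rabs nu + 2) / x) / (t * t).
Proof.
  intros Hg Hx Ht. eapply Rle_trans; [|apply exp_neg_mul_cosh_le; auto; apply Rabs_pos].
  rewrite Rabs_mult, Rabs_pos_eq by (left; apply exp_pos).
  apply Rmult_le_compat_l; [left; apply exp_pos|].
  replace (Rabs nu * t) with (Rabs (nu * t)) by (rewrite Rabs_mult, (Rabs_pos_eq t); lra).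
  apply Hg.
Qed.

Definition bessel_k_integrand (x nu t : R) := exp (- x * cosh t) * cosh (nu * t).

Lemma bessel_k_integrand_pos x nu t : 0 < bessel_k_integrand x nu t.
Proof. apply Rmult_lt_0_compat; [apply exp_pos | apply cosh_pos]. Qed.

Lemma continuous_bessel_k_integrand x nu t : continuous (bessel_k_integrand x nu) t.
Proof.
  apply (ex_derive_continuous (K := R_AbsRing) (V := R_NormedModule)).
  unfold bessel_k_integrand, cosh. auto_derive. exact I.
Qed.

Lemma ex_RInt_gen_bessel_k_integrand x nu : 0 < x ->
  ex_RInt_gen (bessel_k_integrand x nu) (at_point 0) (Rbar_locally p_infty).
Proof.
  intros Hx. apply ex_RInt_gen_Chasles with 1.
  - apply (ex_RInt_gen_at_point (V := R_CompleteNormedModule)), ex_RInt_cont.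
    intros t _. apply continuous_bessel_k_integrand.
  - apply ex_RInt_gen_pinfty with (exp (2 * (Rabs nu + 2) * (Rabs nu + 2) / x)).
    intros t Ht. split; [apply continuous_bessel_k_integrand|].
    apply abs_exp_neg_mul_cosh_mul_le; [exact abs_cosh_le_exp_abs | exact Hx | exact Ht].
Qed.

Lemma is_RInt_gen_BesselK x nu : 0 < x ->
  is_RInt_gen (bessel_k_integrand x nu) (at_point 0) (Rbar_locally p_infty) (BesselK nu x).
Proof.
  intros Hx. apply (RInt_gen_correct (V := R_CompleteNormedModule)).
  now apply ex_RInt_gen_bessel_k_integrand.
Qed.

Lemma BesselK_pos nu x : 0 < x -> 0 < BesselK nu x.
Proof.
  intros Hx. apply is_RInt_gen_pinfty_gt_0 with (at_point 0) (bessel_k_integrand x nu) (-1).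
  - apply at_point_filter.
  - unfold at_point. lra.
  - intros t _. split; [apply continuous_bessel_k_integrand | apply bessel_k_integrand_pos].
  - now apply is_RInt_gen_BesselK.
Qed.

Lemma BesselK_opp nu x : BesselK (- nu) x = BesselK nu x.
Proof.
  unfold BesselK. f_equal. apply functional_extensionality. intros t.
  unfold cosh. replace (- nu * t) with (- (nu * t)) by ring.
  rewrite Ropp_involutive. f_equal. lra.
Qed.

Lemma is_derive_exp_neg_mul_cosh_mul_sinh x nu t : 0 < x ->
  is_derive (fun u => - (2 / x) * (exp (- x * cosh u) * sinh (nu * u))) t
    (bessel_k_integrand x (nu + 1) t
       - (bessel_k_integrand x (nu - 1) t + 2 * nu / x * bessel_k_integrand x nu t)).
Proof.
  intros Hx. unfold bessel_k_integrand, cosh, sinh.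
  replace (exp ((nu + 1) * t)) with (exp (nu * t) * exp t)
    by (rewrite <- exp_plus; f_equal; ring).
  replace (exp (- ((nu + 1) * t))) with (exp (- (nu * t)) * exp (- t))
    by (rewrite <- exp_plus; f_equal; ring).
  replace (exp ((nu - 1) * t)) with (exp (nu * t) * exp (- t))
    by (rewrite <- exp_plus; f_equal; ring).
  replace (exp (- ((nu - 1) * t))) with (exp (- (nu * t)) * exp t)
    by (rewrite <- exp_plus; f_equal; ring).
  auto_derive; [exact I|].
  match goal with |- ?a = ?b => change (@eq R a b) end.
  unfold Rdiv. field. lra.
Qed.

Lemma BesselK_succ nu x : 0 < x ->
  BesselK (nu + 1) x = BesselK (nu - 1) x + 2 * nu / x * BesselK nu x.
Proof.
  intros Hx.
  set (h := fun u => - (2 / x) * (exp (- x * cosh u) * sinh (nu * u))).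
  set (C := exp (2 * (Rabs nu + 2) * (Rabs nu + 2) / x)).
  assert (H : is_RInt_gen (bessel_k_integrand x (nu + 1)) (at_point 0) (Rbar_locally p_infty)
                (BesselK (nu - 1) x + 2 * nu / x * BesselK nu x)).
  2: now apply (is_RInt_gen_unique (V := R_CompleteNormedModule)) in H.
  apply is_RInt_gen_derive_diff with h
    (fun u => bessel_k_integrand x (nu - 1) u + 2 * nu / x * bessel_k_integrand x nu u) (-1).
  - apply at_point_filter.
  - unfold at_point. lra.
  - intros t _. split; [now apply is_derive_exp_neg_mul_cosh_mul_sinh|].
    split; [apply continuous_bessel_k_integrand|].
    apply (ex_derive_continuous (K := R_AbsRing) (V := R_NormedModule)).
    unfold bessel_k_integrand, cosh. auto_derive. exact I.
  - intros P HP. unfold filtermap, at_point.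
    replace (h 0) with 0 by (unfold h; rewrite Rmult_0_r, sinh_0; ring).
    now apply locally_singleton.
  - apply filterlim_pinfty_of_abs_le_inv with (2 / x * C). intros t Ht.
    unfold h. rewrite Rabs_mult, Rabs_Ropp, Rabs_pos_eq by (left; apply Rdiv_lt_0_compat; lra).
    replace (2 / x * C / t) with (2 / x * (C / t)) by (field; lra).
    apply Rmult_le_compat_l; [left; apply Rdiv_lt_0_compat; lra|].
    eapply Rle_trans.
    { apply abs_exp_neg_mul_cosh_mul_le; [exact abs_sinh_le_exp_abs | exact Hx | exact Ht]. }
    apply div_mul_self_le_div; [left; apply exp_pos | exact Ht].
  - apply (is_RInt_gen_plus (V := R_NormedModule)); [now apply is_RInt_gen_BesselK|].
    apply (is_RInt_gen_scal (V := R_NormedModule)). now apply is_RInt_gen_BesselK.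
Qed.

(** * The modified Bessel function I *)

Lemma Gamma_add_nat_succ nu k : 0 <= nu ->
  Gamma (INR (S k) + nu + 1) = (INR k + nu + 1) * Gamma (INR k + nu + 1).
Proof.
  intros Hnu. rewrite S_INR. replace (INR k + 1 + nu + 1) with (INR k + nu + 1 + 1) by ring.
  apply Gamma_succ. pose proof (pos_INR k). lra.
Qed.

Lemma Gamma_le_Gamma_add_nat nu k : 0 <= nu -> Gamma (nu + 1) <= Gamma (INR k + nu + 1).
Proof.
  intros Hnu. induction k as [|k IH].
  - simpl. rewrite Rplus_0_l. apply Rle_refl.
  - rewrite Gamma_add_nat_succ by exact Hnu. pose proof (pos_INR k).
    pose proof (Gamma_pos (INR k + nu + 1) ltac:(lra)). nra.
Qed.

Lemma Series_gt_0 (a : nat -> R) : ex_series a -> (forall k, 0 < a k) -> 0 < Series a.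
Proof.
  intros Ha Hpos. rewrite Series_incr_1 by exact Ha.
  assert (Hzero : Series (fun _ : nat => 0) = 0).
  { rewrite (Series_ext _ (fun k => 0 * a k)) by (intros; ring).
    rewrite Series_scal_l. ring. }
  assert (0 <= Series (fun k => a (S k))).
  { rewrite <- Hzero. apply Series_le.
    - intros k. split; [lra | left; apply Hpos].
    - now apply (ex_series_incr_1 (K := R_AbsRing) (V := R_NormedModule) a). }
  pose proof (Hpos 0%nat). lra.
Qed.

Definition bessel_i_term (nu x : R) (k : nat) :=
  (x / 2) ^ (2 * k) * Rpower (x / 2) nu / (INR (fact k) * Gamma (INR k + nu + 1)).

Lemma bessel_i_term_pos nu x k : 0 <= nu -> 0 < x -> 0 < bessel_i_term nu x k.
Proof.
  intros Hnu Hx. pose proof (pos_INR k). pose proof (INR_fact_lt_0 k).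
  pose proof (Gamma_pos (INR k + nu + 1) ltac:(lra)).
  apply Rdiv_lt_0_compat; apply Rmult_lt_0_compat; auto.
  - apply pow_lt. lra.
  - apply exp_pos.
Qed.

Lemma ex_series_bessel_i_term nu x : 0 <= nu -> 0 < x -> ex_series (bessel_i_term nu x).
Proof.
  intros Hnu Hx.
  set (K := Rpower (x / 2) nu / Gamma (nu + 1)).
  assert (HG : 0 < Gamma (nu + 1)) by (apply Gamma_pos; lra).
  apply (ex_series_le (K := R_AbsRing) (V := R_CompleteNormedModule) _
           (fun k => K * ((x / 2 * (x / 2)) ^ k / INR (fact k)))).
  - intros k. change (norm (bessel_i_term nu x k)) with (Rabs (bessel_i_term nu x k)).
    rewrite Rabs_pos_eq by (left; now apply bessel_i_term_pos).
    unfold bessel_i_term, K. rewrite pow_mult.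
    replace ((x / 2) ^ 2) with (x / 2 * (x / 2)) by ring.
    set (A := (x / 2 * (x / 2)) ^ k * Rpower (x / 2) nu / INR (fact k)).
    assert (HA : 0 <= A).
    { pose proof (INR_fact_lt_0 k). pose proof (exp_pos (nu * ln (x / 2))).
      assert (0 < (x / 2 * (x / 2)) ^ k) by (apply pow_lt; nra).
      unfold A, Rpower. apply Rdiv_le_0_compat; [|lra]. nra. }
    pose proof (Gamma_le_Gamma_add_nat nu k Hnu). pose proof (INR_fact_lt_0 k).
    replace (_ / (INR (fact k) * Gamma (INR k + nu + 1))) with (A / Gamma (INR k + nu + 1))
      by (unfold A; field; lra).
    replace (_ / Gamma (nu + 1) * _) with (A / Gamma (nu + 1)) by (unfold A; field; lra).
    apply Rmult_le_compat_l; [exact HA | apply Rinv_le_contravar; lra].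
  - apply (ex_series_scal_l (K := R_AbsRing) (V := R_NormedModule) K).
    exists (exp (x / 2 * (x / 2))).
    eapply is_series_ext; [|exact (is_exp_Reals (x / 2 * (x / 2)))].
    intros k. simpl. rewrite pow_n_pow. reflexivity.
Qed.

Lemma BesselI_pos nu x : 0 <= nu -> 0 < x -> 0 < BesselI nu x.
Proof.
  intros Hnu Hx. apply Series_gt_0.
  - now apply ex_series_bessel_i_term.
  - intros k. now apply bessel_i_term_pos.
Qed.

Lemma Rpower_add_1 c nu : 0 < c -> Rpower c (nu + 1) = Rpower c nu * c.
Proof. intros Hc. rewrite Rpower_plus, Rpower_1 by exact Hc. reflexivity. Qed.

Lemma bessel_i_term_rec_0 nu x : 0 <= nu -> 0 < x ->
  x * bessel_i_term nu x 0 = 2 * (nu + 1) * bessel_i_term (nu + 1) x 0.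
Proof.
  intros Hnu Hx. unfold bessel_i_term.
  replace (INR 0 + (nu + 1) + 1) with (INR 0 + nu + 1 + 1) by ring.
  rewrite (Gamma_succ (INR 0 + nu + 1)) by (simpl; lra). rewrite Rpower_add_1 by lra.
  pose proof (Gamma_pos (INR 0 + nu + 1) ltac:(simpl; lra)).
  simpl. field. simpl in *. lra.
Qed.

Lemma bessel_i_term_rec_succ nu x k : 0 <= nu -> 0 < x ->
  x * bessel_i_term nu x (S k)
  = x * bessel_i_term (nu + 2) x k + 2 * (nu + 1) * bessel_i_term (nu + 1) x (S k).
Proof.
  intros Hnu Hx. unfold bessel_i_term.
  replace (INR k + (nu + 2) + 1) with (INR (S (S k)) + nu + 1) by (rewrite !S_INR; ring).
  replace (INR (S k) + (nu + 1) + 1) with (INR (S (S k)) + nu + 1) by (rewrite !S_INR; ring).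
  rewrite !Gamma_add_nat_succ by exact Hnu.
  replace (nu + 2) with (nu + 1 + 1) by ring. rewrite !Rpower_add_1 by lra.
  replace (2 * S k)%nat with (S (S (2 * k))) by lia.
  rewrite fact_simpl, mult_INR, !S_INR. simpl pow.
  pose proof (INR_fact_lt_0 k). pose proof (pos_INR k).
  pose proof (Gamma_pos (INR k + nu + 1) ltac:(lra)).
  field. repeat split; lra.
Qed.

Lemma BesselI_rec nu x : 0 <= nu -> 0 < x ->
  x * BesselI nu x = x * BesselI (nu + 2) x + 2 * (nu + 1) * BesselI (nu + 1) x.
Proof.
  intros Hnu Hx. unfold BesselI.
  fold (bessel_i_term nu x) (bessel_i_term (nu + 1) x) (bessel_i_term (nu + 2) x).
  assert (Ex0 := ex_series_bessel_i_term nu x Hnu Hx).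
  assert (Ex1 := ex_series_bessel_i_term (nu + 1) x ltac:(lra) Hx).
  assert (Ex2 := ex_series_bessel_i_term (nu + 2) x ltac:(lra) Hx).
  rewrite (Series_incr_1 (bessel_i_term nu x)) by exact Ex0.
  rewrite (Series_incr_1 (bessel_i_term (nu + 1) x)) by exact Ex1.
  rewrite Rmult_plus_distr_l, <- Series_scal_l.
  rewrite (Series_ext _ (fun k => x * bessel_i_term (nu + 2) x k
                                  + 2 * (nu + 1) * bessel_i_term (nu + 1) x (S k)))
    by (intros k; now apply bessel_i_term_rec_succ).
  rewrite Series_plus.
  - rewrite !Series_scal_l, bessel_i_term_rec_0 by assumption. ring.
  - now apply (ex_series_scal_l (K := R_AbsRing) (V := R_NormedModule) x).
  - apply (ex_series_scal_l (K := R_AbsRing) (V := R_NormedModule) (2 * (nu + 1))).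
    now apply (ex_series_incr_1 (K := R_AbsRing) (V := R_NormedModule) (bessel_i_term (nu + 1) x)).
Qed.

(** * Bounds on the ratios *)

Definition ratio_I (x nu : R) := x * BesselI (nu + 1) x / BesselI nu x.
Definition ratio_K (x nu : R) := x * BesselK (nu + 1) x / BesselK nu x.

Lemma ratio_I_pos x nu : 0 <= nu -> 0 < x -> 0 < ratio_I x nu.
Proof.
  intros Hnu Hx. unfold ratio_I.
  pose proof (BesselI_pos nu x Hnu Hx). pose proof (BesselI_pos (nu + 1) x ltac:(lra) Hx).
  apply Rdiv_lt_0_compat; [apply Rmult_lt_0_compat|]; assumption.
Qed.

Lemma ratio_I_rec x nu : 0 <= nu -> 0 < x ->
  ratio_I x nu * (2 * (nu + 1) + ratio_I x (nu + 1)) = x * x.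
Proof.
  intros Hnu Hx. unfold ratio_I.
  pose proof (BesselI_pos nu x Hnu Hx). pose proof (BesselI_pos (nu + 1) x ltac:(lra) Hx).
  replace (nu + 1 + 1) with (nu + 2) by ring.
  transitivity (x * (x * BesselI (nu + 2) x + 2 * (nu + 1) * BesselI (nu + 1) x) / BesselI nu x).
  - field. lra.
  - rewrite <- BesselI_rec by assumption. field. lra.
Qed.

Lemma ratio_K_pos x nu : 0 < x -> 0 < ratio_K x nu.
Proof.
  intros Hx. unfold ratio_K.
  pose proof (BesselK_pos nu x Hx). pose proof (BesselK_pos (nu + 1) x Hx).
  apply Rdiv_lt_0_compat; [apply Rmult_lt_0_compat|]; assumption.
Qed.

Lemma ratio_K_rec x nu : 0 < x ->
  ratio_K x (nu + 1) = 2 * (nu + 1) + x * x / ratio_K x nu.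
Proof.
  intros Hx. unfold ratio_K.
  pose proof (BesselK_pos nu x Hx). pose proof (BesselK_pos (nu + 1) x Hx).
  rewrite (BesselK_succ (nu + 1)) by exact Hx.
  replace (nu + 1 - 1) with nu by ring.
  field. lra.
Qed.

Lemma ratio_K_half x : 0 < x -> ratio_K x (/ 2) = 1 + x.
Proof.
  intros Hx. unfold ratio_K. pose proof (BesselK_pos (/ 2) x Hx).
  rewrite BesselK_succ by exact Hx.
  replace (/ 2 - 1) with (- / 2) by field. rewrite BesselK_opp.
  field. lra.
Qed.

Lemma contracting_seq_eq_0 (D r : nat -> R) (M : R) (m0 : nat) :
  (forall m, 0 <= D m <= M) -> (forall m, D m <= r m * D (S m)) ->
  (forall m, (m0 <= m)%nat -> r m <= / 2) -> forall m, D m = 0.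
Proof.
  intros HD Hstep Hsmall.
  assert (Hgeom : forall k m, (m0 <= m)%nat -> D m <= M * (/ 2) ^ k).
  { induction k as [|k IH]; intros m Hm; [rewrite Rmult_1_r; apply HD|].
    apply Rle_trans with (/ 2 * D (S m)).
    - apply Rle_trans with (r m * D (S m)); [apply Hstep|].
      apply Rmult_le_compat_r; [apply HD | now apply Hsmall].
    - specialize (IH (S m) ltac:(lia)). simpl. lra. }
  assert (Hfar : forall m, (m0 <= m)%nat -> D m = 0).
  { intros m Hm. apply Rle_antisym; [|apply HD].
    assert (Hlim : is_lim_seq (fun k => M * (/ 2) ^ k) (M * 0)).
    { apply (is_lim_seq_scal_l _ M 0), is_lim_seq_geom.
      rewrite Rabs_pos_eq; lra. }
    rewrite Rmult_0_r in Hlim.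
    exact (is_lim_seq_le (fun _ => D m) _ (D m) 0 (fun k => Hgeom k m Hm)
             (is_lim_seq_const _) Hlim). }
  assert (Hback : forall d m, (m0 <= m + d)%nat -> D m = 0).
  { induction d as [|d IH]; intros m Hm; [apply Hfar; lia|].
    apply Rle_antisym; [|apply HD].
    rewrite <- (Rmult_0_r (r m)), <- (IH (S m)) by lia. apply Hstep. }
  intros m. apply (Hback m0 m). lia.
Qed.

Lemma div_add_sub_div_add_le c k u v : 0 <= c -> 0 < k -> 0 <= u -> 0 <= v ->
  c / (k + u) - c / (k + v) <= c / (k * k) * Rmax (v - u) 0.
Proof.
  intros Hc Hk Hu Hv.
  replace (c / (k + u) - c / (k + v)) with (c / ((k + u) * (k + v)) * (v - u)) by (field; lra).
  destruct (Rle_dec (v - u) 0) as [Hle | Hgt].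
  - rewrite Rmax_right by exact Hle.
    assert (0 <= c / ((k + u) * (k + v))) by (apply Rdiv_le_0_compat; nra). nra.
  - rewrite Rmax_left by lra. apply Rmult_le_compat_r; [lra|].
    apply Rmult_le_compat_l; [exact Hc | apply Rinv_le_contravar; nra].
Qed.

Section RatioBounds.

Variables x nu0 : R.
Hypothesis Hx : 0 < x.
Hypothesis Hnu0 : 0 <= nu0.

Definition rad (c : R) := sqrt (c * c + x * x).

Lemma rad_sq c : rad c * rad c = c * c + x * x.
Proof. apply sqrt_sqrt. nra. Qed.

Lemma rad_nonneg c : 0 <= rad c.
Proof. apply sqrt_pos. Qed.

Lemma lt_rad c : 0 <= c -> c < rad c.
Proof. intros Hc. pose proof (rad_sq c). pose proof (rad_nonneg c). nra. Qed.

Lemma le_rad c : x <= rad c.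
Proof. pose proof (rad_sq c). pose proof (rad_nonneg c). nra. Qed.

Lemma rad_le_add c : 0 <= c -> rad c <= c + x.
Proof. intros Hc. pose proof (rad_sq c). pose proof (rad_nonneg c). nra. Qed.

Lemma rad_le_rad c1 c2 : 0 <= c1 <= c2 -> rad c1 <= rad c2.
Proof. intros Hc. apply sqrt_le_1_alt. nra. Qed.

Lemma sq_div_add_rad c : 0 <= c -> x * x / (c + rad c) = rad c - c.
Proof.
  intros Hc. pose proof (lt_rad c Hc). pose proof (rad_sq c).
  field_simplify_eq; [nra | lra].
Qed.

Let nu (m : nat) := INR m + nu0.

Lemma nu_succ m : nu (S m) = nu m + 1.
Proof. unfold nu. rewrite S_INR. ring. Qed.

Lemma nu_nonneg m : 0 <= nu m.
Proof. unfold nu. pose proof (pos_INR m). lra. Qed.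

Lemma ratio_seq_lower_bound (b : nat -> R) :
  (forall m, 0 < b m) ->
  nu0 + rad nu0 <= b 0%nat <= nu0 + 1 + rad (nu0 + 1) ->
  (forall m, b (S m) = 2 * (nu m + 1) + x * x / b m) ->
  forall m, nu m + rad (nu m) <= b m.
Proof.
  intros Hpos Hb0 Hrec.
  enough (Hboth : forall m, nu m + rad (nu m) <= b m <= nu m + 1 + rad (nu m + 1))
    by (intros m; apply Hboth).
  induction m as [|m [IHlo IHhi]].
  { replace (nu 0) with nu0 by (unfold nu; simpl; ring). exact Hb0. }
  rewrite Hrec, !nu_succ. pose proof (nu_nonneg m).
  pose proof (lt_rad (nu m) ltac:(lra)).
  split.
  - assert (Hdiv : x * x / (nu m + 1 + rad (nu m + 1)) <= x * x / b m).
    { apply Rmult_le_compat_l; [nra | apply Rinv_le_contravar; [apply Hpos | exact IHhi]]. }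
    rewrite sq_div_add_rad in Hdiv by lra. lra.
  - assert (Hdiv : x * x / b m <= x * x / (nu m + rad (nu m))).
    { apply Rmult_le_compat_l; [nra | apply Rinv_le_contravar; [lra | exact IHlo]]. }
    rewrite sq_div_add_rad in Hdiv by lra.
    pose proof (rad_le_rad (nu m) (nu m + 1 + 1) ltac:(lra)). lra.
Qed.

Section UpperBound.

Variable a : nat -> R.
Hypothesis Hpos : forall m, 0 < a m.
Hypothesis Hrec : forall m, a m * (2 * (nu m + 1) + a (S m)) = x * x.

Let hi m := rad (nu m) - nu m.
Let lo m := rad (nu m + 1) - (nu m + 1).
Let excess m := Rmax (Rmax (a m - hi m) (lo m - a m)) 0.

Lemma ratio_seq_eq m : a m = x * x / (2 * (nu m + 1) + a (S m)).
Proof.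
  pose proof (nu_nonneg m). pose proof (Hpos (S m)).
  rewrite <- (Hrec m). field. lra.
Qed.

Lemma bracket_hi_nonneg m : 0 <= hi m.
Proof. pose proof (lt_rad (nu m) (nu_nonneg m)). unfold hi. lra. Qed.

Lemma bracket_lo_nonneg m : 0 <= lo m.
Proof.
  pose proof (nu_nonneg m). pose proof (lt_rad (nu m + 1) ltac:(lra)). unfold lo. lra.
Qed.

Lemma bracket_lo_eq m : lo m = x * x / (2 * (nu m + 1) + hi (S m)).
Proof.
  unfold lo, hi. rewrite nu_succ. pose proof (nu_nonneg m).
  replace (2 * (nu m + 1) + (rad (nu m + 1) - (nu m + 1))) with (nu m + 1 + rad (nu m + 1))
    by ring.
  symmetry. apply sq_div_add_rad. lra.
Qed.

Lemma bracket_hi_ge m : x * x / (2 * (nu m + 1) + lo (S m)) <= hi m.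
Proof.
  unfold lo, hi. rewrite nu_succ. pose proof (nu_nonneg m).
  rewrite <- (sq_div_add_rad (nu m)) by lra.
  replace (2 * (nu m + 1) + (rad (nu m + 1 + 1) - (nu m + 1 + 1)))
    with (nu m + rad (nu m + 1 + 1)) by ring.
  pose proof (rad_le_rad (nu m) (nu m + 1 + 1) ltac:(lra)).
  pose proof (lt_rad (nu m) ltac:(lra)).
  apply Rmult_le_compat_l; [nra | apply Rinv_le_contravar; lra].
Qed.

Lemma ratio_excess_step m :
  excess m <= x * x / ((2 * (nu m + 1)) * (2 * (nu m + 1))) * excess (S m).
Proof.
  pose proof (nu_nonneg m). pose proof (Hpos (S m)).
  pose proof (bracket_hi_nonneg (S m)). pose proof (bracket_lo_nonneg (S m)).
  set (k := 2 * (nu m + 1)). assert (Hk : 0 < k) by (unfold k; lra).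
  set (r := x * x / (k * k)).
  assert (Hr : 0 <= r) by (unfold r; apply Rdiv_le_0_compat; nra).
  assert (Hhi : a (S m) - hi (S m) <= excess (S m))
    by (unfold excess; eapply Rle_trans; [apply Rmax_l | apply Rmax_l]).
  assert (Hlo : lo (S m) - a (S m) <= excess (S m))
    by (unfold excess; eapply Rle_trans; [apply Rmax_r | apply Rmax_l]).
  assert (Hmax : forall u, u <= excess (S m) -> r * Rmax u 0 <= r * excess (S m)).
  { intros u Hu. apply Rmult_le_compat_l; [exact Hr|].
    apply Rmax_lub; [exact Hu | apply Rmax_r]. }
  unfold excess at 1.
  apply Rmax_lub; [apply Rmax_lub | apply Rmult_le_pos; [exact Hr | apply Rmax_r]].
  - rewrite (ratio_seq_eq m). eapply Rle_trans; [|apply (Hmax _ Hlo)].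
    eapply Rle_trans; [|apply div_add_sub_div_add_le with (u := a (S m)); nra].
    pose proof (bracket_hi_ge m) as Hge. fold k in Hge |- *. lra.
  - rewrite (ratio_seq_eq m), (bracket_lo_eq m). fold k.
    eapply Rle_trans; [|apply (Hmax _ Hhi)].
    apply div_add_sub_div_add_le; nra.
Qed.

Lemma ratio_excess_bounds m : 0 <= excess m <= x * x.
Proof.
  pose proof (nu_nonneg m). pose proof (Hpos m). pose proof (Hpos (S m)).
  pose proof (bracket_hi_nonneg m). pose proof (bracket_hi_nonneg (S m)).
  assert (Hsmall : forall u, 0 <= u -> x * x / (2 * (nu m + 1) + u) <= x * x).
  { intros u Hu. apply Rmult_le_reg_r with (2 * (nu m + 1) + u); [lra|].
    replace (x * x / (2 * (nu m + 1) + u) * (2 * (nu m + 1) + u)) with (x * x) by (field; lra).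
    nra. }
  pose proof (Hsmall _ (Rlt_le _ _ (Hpos (S m)))) as Ha. rewrite <- ratio_seq_eq in Ha.
  pose proof (Hsmall _ (bracket_hi_nonneg (S m))) as Hlo. rewrite <- bracket_lo_eq in Hlo.
  split; [apply Rmax_r|]. unfold excess. apply Rmax_lub; [apply Rmax_lub|]; nra.
Qed.

Lemma ratio_seq_upper_bound m : a m <= rad (nu m) - nu m.
Proof.
  destruct (INR_unbounded x) as [m0 Hm0].
  assert (Hzero : excess m = 0).
  { apply (contracting_seq_eq_0 excess
             (fun j => x * x / ((2 * (nu j + 1)) * (2 * (nu j + 1)))) (x * x) m0).
    - exact ratio_excess_bounds.
    - exact ratio_excess_step.
    - intros j Hj. apply le_INR in Hj. pose proof (nu_nonneg j).
      assert (x <= nu j) by (unfold nu in *; lra).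
      unfold Rdiv. apply Rmult_le_reg_r with ((2 * (nu j + 1)) * (2 * (nu j + 1))); [nra|].
      rewrite Rmult_assoc, Rinv_l by nra. nra. }
  assert (a m - hi m <= excess m)
    by (unfold excess; eapply Rle_trans; [apply Rmax_l | apply Rmax_l]).
  unfold hi in *. lra.
Qed.

End UpperBound.

End RatioBounds.

Lemma sph_i_ratio n x : 0 < x -> sph_i (S n) x / sph_i n x = ratio_I x (INR n + / 2) / x.
Proof.
  intros Hx. unfold sph_i, ratio_I. rewrite S_INR.
  replace (INR n + 1 + / 2) with (INR n + / 2 + 1) by ring.
  assert (0 < sqrt (PI / (2 * x)))
    by (apply sqrt_lt_R0, Rdiv_lt_0_compat; [apply PI_RGT_0 | lra]).
  pose proof (BesselI_pos (INR n + / 2) x ltac:(pose proof (pos_INR n); lra) Hx).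
  field. lra.
Qed.

Lemma sph_k_ratio n x : 0 < x -> sph_k (S n) x / sph_k n x = ratio_K x (INR n + / 2) / x.
Proof.
  intros Hx. unfold sph_k, ratio_K. rewrite S_INR.
  replace (INR n + 1 + / 2) with (INR n + / 2 + 1) by ring.
  assert (0 < sqrt (2 / (PI * x)))
    by (apply sqrt_lt_R0, Rdiv_lt_0_compat; [lra | pose proof PI_RGT_0; nra]).
  pose proof (BesselK_pos (INR n + / 2) x Hx).
  field. lra.
Qed.

Theorem lemma3 (n : nat) (x : R) (hx : 0 < x) :
  2 * INR n / x + sph_i (S n) x / sph_i n x - sph_k (S n) x / sph_k n x < 0.
Proof.
  assert (Hshift : forall m, INR (S m) + / 2 = INR m + / 2 + 1) by (intros m; rewrite S_INR; ring).
  assert (HI : ratio_I x (INR n + / 2) <= rad x (INR n + / 2) - (INR n + / 2)).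
  { apply (ratio_seq_upper_bound x (/ 2) hx ltac:(lra) (fun m => ratio_I x (INR m + / 2))).
    - intros m. apply ratio_I_pos; [pose proof (pos_INR m); lra | exact hx].
    - intros m. rewrite Hshift. apply ratio_I_rec; [pose proof (pos_INR m); lra | exact hx]. }
  assert (HK : INR n + / 2 + rad x (INR n + / 2) <= ratio_K x (INR n + / 2)).
  { apply (ratio_seq_lower_bound x (/ 2) hx ltac:(lra) (fun m => ratio_K x (INR m + / 2))).
    - intros m. now apply ratio_K_pos.
    - simpl. rewrite Rplus_0_l, ratio_K_half by exact hx.
      pose proof (rad_le_add x hx (/ 2) ltac:(lra)). pose proof (le_rad x hx (/ 2 + 1)). lra.
    - intros m. rewrite Hshift. now apply ratio_K_rec. }
  rewrite sph_i_ratio, sph_k_ratio by exact hx.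
  replace (2 * INR n / x + ratio_I x (INR n + / 2) / x - ratio_K x (INR n + / 2) / x)
    with ((2 * INR n + ratio_I x (INR n + / 2) - ratio_K x (INR n + / 2)) / x) by (field; lra).
  assert (2 * INR n + ratio_I x (INR n + / 2) - ratio_K x (INR n + / 2) < 0) by lra.
  unfold Rdiv. pose proof (Rinv_0_lt_compat x hx). nra.
Qed.
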